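(* Let $c,m>0$ be constants and let $f:\mathbb{Z}\to\mathbb{Z}$ be a non-decreasing map such that $f(j)-f(i)\leq j-i$ for all integers $i<j$, and $f(j)-f(i)\geq c\,(j-i)$ for all integers $i,j$ with $i+m\leq j$. Let $B$ be an integer-valued random variable with $E[|f(B)|]<+\infty$. Then $$\mathrm{Var}[f(B)]\geq c^2\left(1-\frac{2m}{c\sqrt{\mathrm{Var}[B]}}\right)\mathrm{Var}[B].$$ *)

From HB Require Import structures.
From mathcomp Require Import all_boot all_order all_algebra.
From mathcomp Require Import all_classical all_reals all_analysis.
Set Implicit Arguments. Unset Strict Implicit. Unset Printing Implicit Defensive.
Import Order.TTheory GRing.Theory Num.Theory.
Local Open Scope ring_scope.

Definition int_rv (T : Type) (R : realType) (B : T -> int) : T -> R :=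
  fun w => ((B w)%:~R)%R.

From HB Require Import structures.
From mathcomp Require Import all_boot all_order all_algebra.
From mathcomp Require Import all_classical all_reals all_analysis.
From mathcomp Require Import ring lra zify measurable_realfun.
Set Implicit Arguments. Unset Strict Implicit. Unset Printing Implicit Defensive.
Import Order.TTheory GRing.Theory Num.Theory.
Local Open Scope ring_scope.

(* Let v = Var[B] and b = E[B].  Since f never decreases and grows at rate at
   least c beyond distance m, the constant K = f(floor b) + c (b - floor b)
   satisfies
     c (j - b)^2 - c m |j - b| <= (f j - K) (j - b)   for every integer j.
   Put x = B - b and y = f(B) - a for an arbitrary centring a.  From
   y^2 >= 2 c x y - c^2 x^2 and 2|x| <= x^2/sqrt v + sqrt v we get a quadratic
   lower bound for y^2 in x; taking expectations (E[x] = 0, E[x^2] = v) gives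
   E[y^2] >= c^2 v - 2 c^2 m sqrt v, which dominates the claimed bound as
   c <= 1.  When v = +oo, the same inequality bounds x^2 by a constant plus a
   multiple of y^2, so Var[f(B)] = +oo as well. *)

Lemma le_mul_of_affine_bounds (R : realFieldType) (c m x y : R) :
  (0 <= x -> c * x - c * m <= y) -> (x <= 0 -> y <= c * x + c * m) ->
  c * x ^+ 2 - c * m * `|x| <= y * x.
Proof.
move=> y_ge y_le; have [x0|x0] := lerP 0 x.
- have := y_ge x0; rewrite ger0_norm //.
  have : 0 <= (y - (c * x - c * m)) * x by apply: mulr_ge0; lra.
  lra.
- have := y_le (ltW x0); rewrite ltr0_norm //.
  have : 0 <= (c * x + c * m - y) * - x by apply: mulr_ge0; lra.
  lra.
Qed.

Section coarse_monotone_map.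
Variables (R : archiRealFieldType) (c m : R) (f : int -> int).
Hypotheses (c_gt0 : 0 < c) (m_gt0 : 0 < m).
Hypothesis f_nondecreasing : {homo f : i j / i <= j}.
Hypothesis f_expanding : forall i j : int,
  i%:~R + m <= j%:~R -> c * (j - i)%:~R <= (f j - f i)%:~R.

Lemma expansion_le1 : (forall i j : int, i < j -> f j - f i <= j - i) -> c <= 1.
Proof.
move=> f_lipschitz; set n := Num.ceil m.
have m_le_n : m <= n%:~R := ceil_ge m.
have n_gt0 : (0 : R) < n%:~R := lt_le_trans m_gt0 m_le_n.
have /f_expanding : 0%:~R + m <= n%:~R by rewrite add0r.
have : f n - f 0 <= n - 0 by apply: f_lipschitz; rewrite -(ltr_int R).
rewrite -(ler_int R) !subr0 => le_fn cn; rewrite -(ler_pM2r n_gt0) mul1r.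
exact: le_trans cn le_fn.
Qed.

Lemma increment_ge_affine (i j : int) : i <= j ->
  c * (j - i)%:~R - c * m <= (f j - f i)%:~R.
Proof.
move=> le_ij; have [far|near] := lerP (i%:~R + m) j%:~R.
  by have := f_expanding far; have := mulr_gt0 c_gt0 m_gt0; lra.
have : (0 : R) <= (f j - f i)%:~R by rewrite ler0z subr_ge0 f_nondecreasing.
have : c * (j - i)%:~R <= c * m by rewrite ler_pM2l // intrB; lra.
lra.
Qed.

Lemma quadratic_growth (b : R) : exists K : R, forall j : int,
  c * (j%:~R - b) ^+ 2 - c * m * `|j%:~R - b| <= ((f j)%:~R - K) * (j%:~R - b).
Proof.
set k := Num.floor b; have /andP[k_le_b] := floor_itv b.
rewrite -/k intrD => b_lt_k1.
exists ((f k)%:~R + c * (b - k%:~R)) => j.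
apply: le_mul_of_affine_bounds => j_b.
- have k_le_j : k <= j by rewrite -(ler_int R); lra.
  by have := increment_ge_affine k_le_j; rewrite !intrB; lra.
- have j_le_k : j <= k by rewrite -ltzD1 -(ltr_int R) intrD; lra.
  by have := increment_ge_affine j_le_k; rewrite !intrB; lra.
Qed.

End coarse_monotone_map.

Section quadratic_growth_bounds.
Variables (R : realFieldType) (c m : R).
Hypotheses (c_gt0 : 0 < c) (m_gt0 : 0 < m).

Lemma growth_sqr_le (x y : R) :
  c * x ^+ 2 - c * m * `|x| <= y * x -> x ^+ 2 <= 2 * m ^+ 2 + 2 * c^-2 * y ^+ 2.
Proof.
move=> growth; have c2_gt0 : 0 < c ^+ 2 := exprn_gt0 2 c_gt0.
rewrite -(ler_pM2l c2_gt0).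
have -> : c ^+ 2 * (2 * m ^+ 2 + 2 * c^-2 * y ^+ 2) = 2 * c ^+ 2 * m ^+ 2 + 2 * y ^+ 2.
  by field; rewrite gt_eqF.
have yx : y * x <= `|y| * `|x| by rewrite -normrM ler_norm.
rewrite -[x ^+ 2]real_normK ?num_real // -[y ^+ 2]real_normK ?num_real //.
rewrite -[x ^+ 2]real_normK ?num_real // in growth.
have : c * (c * `|x| ^+ 2) <= c * (c * m * `|x| + `|y| * `|x|).
  by rewrite ler_pM2l //; lra.
have := sqr_ge0 (c * `|x| / 2 - c * m); have := sqr_ge0 (c * `|x| / 2 - `|y|).
nra.
Qed.

Lemma growth_sqr_ge (s x y e : R) : 0 < s ->
  c * x ^+ 2 - c * m * `|x| <= (y + e) * x ->
  (c ^+ 2 - c ^+ 2 * m / s) * x ^+ 2 + - (2 * c * e) * x + - (c ^+ 2 * m * s)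
    <= y ^+ 2.
Proof.
move=> s_gt0 growth.
have amgm : 2 * `|x| <= x ^+ 2 / s + s.
  rewrite -(ler_pM2r s_gt0) [leRHS]mulrDl divfK ?gt_eqF //.
  have := sqr_ge0 (`|x| - s); rewrite -[x ^+ 2]real_normK ?num_real //; nra.
have : c ^+ 2 * m * (2 * `|x|) <= c ^+ 2 * m * (x ^+ 2 / s + s).
  by rewrite ler_pM2l // mulr_gt0 // exprn_gt0.
have : 2 * c * (c * x ^+ 2 - c * m * `|x| - e * x) <= 2 * c * (y * x).
  by rewrite ler_pM2l ?mulr_gt0 //; lra.
have := sqr_ge0 (y - c * x).
nra.
Qed.

End quadratic_growth_bounds.

Section centered_moments.
Local Open Scope ereal_scope.
Context d (T : measurableType d) (R : realType) (P : probability T R).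

Lemma variance_integral (X : T -> R) :
  'V_P[X] = \int[P]_w (((X w - fine 'E_P[X]) ^+ 2)%:E).
Proof.
rewrite /variance covariance.unlock expectation.unlock.
by apply: eq_integral => w _ /=; rewrite expr2.
Qed.

Lemma ge0_integrable (G : T -> R) : measurable_fun setT G ->
  (forall w, 0 <= G w)%R -> \int[P]_w (G w)%:E < +oo ->
  P.-integrable setT (EFin \o G).
Proof.
move=> mG G_ge0 G_lty; apply/integrableP; split; first exact/measurable_EFinP.
by under eq_integral => w _ do rewrite /= ger0_norm //.
Qed.

Lemma sqr_centered_integrable (X : T -> R) : measurable_fun setT X ->
  'V_P[X] < +oo ->
  P.-integrable setT (EFin \o (fun w => (X w - fine 'E_P[X]) ^+ 2)%R).
Proof.
move=> mX; rewrite variance_integral; apply: ge0_integrable => [|w]; last exact: sqr_ge0.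
by apply/measurable_funX/measurable_funB => //; exact: measurable_cst.
Qed.

Lemma centered_integrable (X : T -> R) : measurable_fun setT X ->
  'V_P[X] < +oo -> P.-integrable setT (EFin \o (fun w => X w - fine 'E_P[X])%R).
Proof.
move=> mX /(sqr_centered_integrable mX) sqr_int; set b := fine _ in sqr_int *.
have one_int : P.-integrable setT (EFin \o cst 1%R).
  exact: finite_measure_integrable_cst.
apply: le_integrable (integrableD _ sqr_int one_int) => //.
  by apply/measurable_EFinP/measurable_funB => //; exact: measurable_cst.
move=> w _ /=; rewrite lee_fin [leRHS]ger0_norm ?addr_ge0 ?sqr_ge0 //.
have := sqr_ge0 (`|X w - b| - 1)%R.
rewrite -[((X w - b) ^+ 2)%R]real_normK ?num_real //; nra.
Qed.

Lemma integral_centered (X : T -> R) : measurable_fun setT X ->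
  'V_P[X] < +oo -> \int[P]_w ((X w - fine 'E_P[X])%:E) = 0.
Proof.
move=> mX /(centered_integrable mX) Xb_int; set b := fine _ in Xb_int *.
have b_int : P.-integrable setT (EFin \o cst b).
  exact: finite_measure_integrable_cst.
have X_int : P.-integrable setT (EFin \o X).
  by apply: eq_integrable (integrableD _ Xb_int b_int) => // w _ /=; rewrite -EFinD subrK.
under eq_integral do rewrite EFinB.
rewrite integralB_EFin // integral_cst //= probability_setT mule1.
by rewrite /b expectation.unlock fineK ?subee // integrable_fin_num.
Qed.

Lemma centered_quadratic_integrable (X : T -> R) (a2 a1 a0 : R) :
  measurable_fun setT X -> 'V_P[X] < +oo ->
  P.-integrable setT (fun w =>
    ((a2 * (X w - fine 'E_P[X]) ^+ 2 + a1 * (X w - fine 'E_P[X]) + a0)%:E)).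
Proof.
move=> mX V_lty; have a0_int : P.-integrable setT (EFin \o cst a0).
  exact: finite_measure_integrable_cst.
exact: eq_integrable (integrableD _ (integrableD _
  (integrableZl _ a2 (sqr_centered_integrable mX V_lty))
  (integrableZl _ a1 (centered_integrable mX V_lty))) a0_int).
Qed.

Lemma integral_centered_quadratic (X : T -> R) (v a2 a1 a0 : R) :
  measurable_fun setT X -> 'V_P[X] = v%:E ->
  \int[P]_w ((a2 * (X w - fine 'E_P[X]) ^+ 2 + a1 * (X w - fine 'E_P[X]) + a0)%:E)
    = (a2 * v + a0)%:E.
Proof.
move=> mX VX; have V_lty : 'V_P[X] < +oo by rewrite VX ltry.
under eq_integral do rewrite 2!EFinD (EFinM a2) (EFinM a1).
rewrite integralD //; last 2 first.
- apply: integrableD => //; apply: integrableZl => //.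
    exact: sqr_centered_integrable.
  exact: centered_integrable.
- exact: finite_measure_integrable_cst.
rewrite integralD //; last 2 first.
- by apply: integrableZl => //; exact: sqr_centered_integrable.
- by apply: integrableZl => //; exact: centered_integrable.
rewrite !integralZl //; last 2 first.
- exact: centered_integrable.
- exact: sqr_centered_integrable.
rewrite -variance_integral VX integral_centered // mule0 adde0.
by rewrite integral_cst //= probability_setT mule1 -EFinM -EFinD.
Qed.

End centered_moments.

Section variance_growth.
Local Open Scope ereal_scope.
Context d (T : measurableType d) (R : realType) (P : probability T R).
Variables (c m : R) (X Y : T -> R).
Hypotheses (c_gt0 : (0 < c)%R) (m_gt0 : (0 < m)%R).
Hypotheses (mX : measurable_fun setT X) (mY : measurable_fun setT Y).
Hypothesis growth : forall b : R, exists K : R, forall w,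
  (c * (X w - b) ^+ 2 - c * m * `|X w - b| <= (Y w - K) * (X w - b))%R.

Lemma variance_growth_pinfty : 'V_P[X] = +oo -> 'V_P[Y] = +oo.
Proof.
move=> VX; apply/eqP; apply: contraT; rewrite -ltey => VY_lty.
have sqrY_int := sqr_centered_integrable mY VY_lty.
set a := fine 'E_P[Y] in sqrY_int.
have [K growthK] := growth (fine 'E_P[X]); set b := fine _ in growthK.
pose C := (2 * m ^+ 2 + 4 * c^-2 * (a - K) ^+ 2)%R.
have C_int : P.-integrable setT (EFin \o cst C).
  exact: finite_measure_integrable_cst.
have sqrX_int : P.-integrable setT (EFin \o (fun w => (X w - b) ^+ 2)%R).
  apply: le_integrable (integrableD _ C_int (integrableZl _ (4 * c^-2) sqrY_int)) => //.
    by apply/measurable_EFinP/measurable_funX/measurable_funB => //; exact: measurable_cst.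
  move=> w _ /=; rewrite lee_fin ger0_norm ?sqr_ge0 //; apply: le_trans (ler_norm _).
  have := growth_sqr_le c_gt0 (growthK w).
  have : ((Y w - K) ^+ 2 <= 2 * (Y w - a) ^+ 2 + 2 * (a - K) ^+ 2)%R.
    by have := sqr_ge0 (Y w - a - (a - K))%R; lra.
  have c2_ge0 : (0 <= c^-2)%R by rewrite invr_ge0 exprn_ge0 // ltW.
  move=> /(ler_wpM2l c2_ge0); rewrite /C; lra.
by move: (integrable_lty measurableT sqrX_int); rewrite -variance_integral VX.
Qed.

Lemma variance_growth_lower_bound : (c <= 1)%R -> forall v : R, 'V_P[X] = v%:E ->
  ((c ^+ 2 * (1 - (2 * m) / (c * Num.sqrt v)) * v)%:E <= 'V_P[Y]).
Proof.
move=> c_le1 v VX; have [->|v_neq0] := eqVneq v 0%R.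
  by rewrite mulr0 variance_ge0.
have v_gt0 : (0 < v)%R.
  by rewrite lt_neqAle eq_sym v_neq0 -lee_fin -VX variance_ge0.
have [->|] := eqVneq 'V_P[Y] +oo; first exact: leey.
rewrite -ltey => /(sqr_centered_integrable mY) sqrY_int.
set a := fine 'E_P[Y] in sqrY_int.
have [K growthK] := growth (fine 'E_P[X]); set b := fine _ in growthK.
set s := Num.sqrt v; have s_gt0 : (0 < s)%R by rewrite sqrtr_gt0.
pose a2 := (c ^+ 2 - c ^+ 2 * m / s)%R.
pose a1 := (- (2 * c * (a - K)))%R.
pose a0 := (- (c ^+ 2 * m * s))%R.
apply: (@le_trans _ _ (a2 * v + a0)%:E).
  have v_sqr : v = (s ^+ 2)%R by rewrite sqr_sqrtr // ltW.
  rewrite lee_fin /a2 /a0 v_sqr.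
  have -> : (c ^+ 2 * (1 - 2 * m / (c * s)) * s ^+ 2 = c ^+ 2 * s ^+ 2 - 2 * c * m * s)%R.
    by field; rewrite ?gt_eqF.
  have -> : ((c ^+ 2 - c ^+ 2 * m / s) * s ^+ 2 + - (c ^+ 2 * m * s)
             = c ^+ 2 * s ^+ 2 - 2 * c * (c * m * s))%R by field; rewrite gt_eqF.
  have ms_gt0 : (0 < m * s)%R by exact: mulr_gt0.
  have : (c * (m * s) <= 1 * (m * s))%R by rewrite ler_pM2r.
  move=> /(ler_wpM2l (ltW c_gt0)); lra.
rewrite -(integral_centered_quadratic a2 a1 a0 mX VX) variance_integral.
apply: le_integral => //.
  by apply: centered_quadratic_integrable => //; rewrite VX ltry.
move=> w _; rewrite lee_fin; apply: growth_sqr_ge => //.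
by rewrite -/a -/b subrKA.
Qed.

End variance_growth.

Lemma measurable_int_rv_nondecreasing (d : measure_display) (T : measurableType d)
    (R : realType) (f : int -> int) (B : T -> int) :
  {homo f : i j / i <= j} -> measurable_fun setT (int_rv R B) ->
  measurable_fun setT (int_rv R (f \o B)).
Proof.
move=> f_nondecreasing mB; pose g (x : R) : R := (f (Num.floor x))%:~R.
have -> : int_rv R (f \o B) = g \o int_rv R B.
  by apply: funext => w; rewrite /g /int_rv /= intrKfloor.
apply: measurableT_comp mB; apply: nondecreasing_measurable => // x y le_xy.
by rewrite /g ler_int f_nondecreasing // le_floor.
Qed.

Theorem lemma4 (d : measure_display) (T : measurableType d) (R : realType)
  (P : probability T R) (c m : R) (f : int -> int) (B : T -> int) :
  0 < c -> 0 < m ->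
  (forall i j : int, i <= j -> f i <= f j) ->
  (forall i j : int, i < j -> f j - f i <= j - i) ->
  (forall i j : int, i%:~R + m <= j%:~R ->
     c * (j - i)%:~R <= (f j - f i)%:~R) ->
  measurable_fun setT (int_rv R B) ->
  (\int[P]_w (`| int_rv R (f \o B) w |)%:E < +oo)%E ->
  (forall v : R, 'V_P[int_rv R B] = v%:E ->
     ((c ^+ 2 * (1 - (2 * m) / (c * Num.sqrt v)) * v)%:E
        <= 'V_P[int_rv R (f \o B)])%E)
  /\ ('V_P[int_rv R B] = +oo%E -> 'V_P[int_rv R (f \o B)] = +oo%E).
Proof.
move=> c_gt0 m_gt0 f_nondecreasing f_lipschitz f_expanding mB _.
have c_le1 := expansion_le1 m_gt0 f_expanding f_lipschitz.
have mfB := measurable_int_rv_nondecreasing f_nondecreasing mB.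
have growth (b : R) : exists K : R, forall w,
    c * (int_rv R B w - b) ^+ 2 - c * m * `|int_rv R B w - b|
      <= (int_rv R (f \o B) w - K) * (int_rv R B w - b).
  have [K growthK] := quadratic_growth c_gt0 m_gt0 f_nondecreasing f_expanding b.
  by exists K => w; apply: growthK.
split; first exact: variance_growth_lower_bound c_gt0 m_gt0 mB mfB growth c_le1.
exact: variance_growth_pinfty c_gt0 mB mfB growth.
Qed.
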